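(* Let $h\ge 0$ and $0\le k\le h$. The generating function $f_k^{(h)}(z)=\sum_{n\ge 0} a^{(h)}_{n,k}z^n$ satisfies $$f_k^{(h)}(z)=z^k\,\frac{d_{h-k}}{d_{h+1}},$$ where $a^{(h)}_{n,k}$ is the number of partial ternary paths of length $n$ ending at level $k$ all of whose ordinates are at most $h$, and the polynomials $d_j=d_j(z)$ are defined by $\sum_{j\ge 0}d_jX^j=\dfrac{1}{1-X+z^3X^3}$ (equivalently $d_0=d_1=d_2=1$, $d_j=d_{j-1}-z^3d_{j-3}$ for $j\ge 3$).
   Context: A partial ternary path of length $n$ is a lattice path $(0,c_0),\dots,(n,c_n)$ with $c_0=0$, steps $(1,1)$ or $(1,-2)$, and all $c_j\ge 0$; it ends at level $c_n$. *)

From HB Require Import structures.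
From mathcomp Require Import all_boot all_order all_algebra.
Set Implicit Arguments. Unset Strict Implicit. Unset Printing Implicit Defensive.
Import Order.TTheory GRing.Theory Num.Theory.
Local Open Scope ring_scope.

(* A step is a boolean: true = (1,1), false = (1,-2). *)
Definition stepv (b : bool) : int := if b then 1 else -2.

Definition lv (s : seq bool) (i : nat) : int :=
  \sum_(j < i) stepv (nth false s j).

Definition a_count (h n k : nat) : nat :=
  #|[set t : n.-tuple bool |
      [forall i : 'I_n.+1, (0 <= lv t i) && (lv t i <= h%:Z)]
      && (lv t n == k%:Z)]|.

(* dtrip j = (d_j, d_{j+1}, d_{j+2}) *)
Fixpoint dtrip (j : nat) : {poly int} * {poly int} * {poly int} :=
  match j with
  | 0 => (1, 1, 1)
  | j'.+1 => let: (x, y, w) := dtrip j' in (y, w, w - 'X^3 * x)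
  end.
Definition d (j : nat) : {poly int} := (dtrip j).1.1.

Definition fps := nat -> int.
Definition fps_mul (f g : fps) : fps :=
  fun n => \sum_(i < n.+1) f i * g (n - i)%N.
Definition fps_of_poly (p : {poly int}) : fps := fun n => p`_n.

Definition f_gen (h k : nat) : fps := fun n => (a_count h n k)%:Z.

From HB Require Import structures.
From mathcomp Require Import all_boot all_order all_algebra.
From Stdlib Require Import FunctionalExtensionality.
Import Order.TTheory GRing.Theory Num.Theory.
Local Open Scope ring_scope.

(* Both [f_k^(h) * d_(h+1)] and [z^k * d_(h-k)], for [0 <= k <= h], solve the
   linear system
     X_k = [k = 0] d_(h+1) + z X_(k-1) + z X_(k+2)
   in which terms whose index leaves [0, h] are dropped.  For the paths this is
   the decomposition by the last step (a path ends at [k] iff its prefix ends at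
   [k-1] or [k+2]); for the polynomials it is the recurrence
   [d_j = d_(j+1) + z^3 d_(j-2)].  Comparing coefficients of [z^n], the system
   determines [X_k] by induction on [n], so the two solutions coincide. *)

Lemma card_set_count (T : finType) (P : pred T) :
  #|[set t | P t]| = count P (enum T).
Proof.
rewrite cardsE cardE /enum_mem size_filter.
by rewrite [in RHS](eq_filter (a2 := predT)) // filter_predT.
Qed.

Fixpoint bool_seqs (n : nat) : seq (seq bool) :=
  if n is n'.+1 then [seq rcons s b | s <- bool_seqs n', b <- [:: true; false]]
  else [:: [::]].

Lemma bool_seqsS n :
  bool_seqs n.+1 = [seq rcons s b | s <- bool_seqs n, b <- [:: true; false]].
Proof. by []. Qed.

Lemma bool_seqs_uniq n : uniq (bool_seqs n).
Proof.
elim: n => [//|n IHn]; apply: allpairs_uniq => //.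
by move=> [s1 b1] [s2 b2] _ _ /= /rcons_inj.
Qed.

Lemma mem_bool_seqs n s : (s \in bool_seqs n) = (size s == n).
Proof.
elim: n s => [|n IHn] s; first by case: s.
apply/allpairsP/idP => [[[s' b] /= [s'_in _ ->]]|].
  by rewrite size_rcons eqSS -IHn.
case/lastP: s => [//|s b]; rewrite size_rcons eqSS => size_s.
by exists (s, b) => /=; split => //; [rewrite IHn | case: b].
Qed.

Lemma count_bool_seqsS n (P : pred (seq bool)) :
  count P (bool_seqs n.+1) =
  (count (fun s => P (rcons s true)) (bool_seqs n) +
   count (fun s => P (rcons s false)) (bool_seqs n))%N.
Proof.
rewrite bool_seqsS; elim: (bool_seqs n) => [//|s l IHl].
by rewrite allpairs_cons count_cat IHl /= !addn0 addnACA.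
Qed.

Lemma card_tuple_bool_seqs n (P : pred (seq bool)) :
  #|[set t : n.-tuple bool | P t]| = count P (bool_seqs n).
Proof.
rewrite card_set_count -(count_map val P); apply/permP/uniq_perm.
- by rewrite map_inj_uniq ?enum_uniq //; apply: val_inj.
- exact: bool_seqs_uniq.
move=> s; rewrite mem_bool_seqs; apply/mapP/idP => [[t _ ->]|/eqP size_s].
  by rewrite size_tuple.
by exists (Tuple (introT eqP size_s)); rewrite ?mem_enum.
Qed.

Lemma lv_rcons s b i : (i <= size s)%N -> lv (rcons s b) i = lv s i.
Proof.
move=> le_i_s; apply: eq_bigr => j _; rewrite nth_rcons.
by rewrite (leq_trans (ltn_ord j) le_i_s).
Qed.

Lemma lv_rcons_size s b : lv (rcons s b) (size s).+1 = lv s (size s) + stepv b.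
Proof.
rewrite /lv big_ord_recr /= nth_rcons ltnn eqxx; congr (_ + _).
by apply: eq_bigr => j _; rewrite nth_rcons ltn_ord.
Qed.

Definition in_strip (h : nat) (c : int) := (0 <= c) && (c <= h%:Z).

Definition bounded_path (h : nat) (s : seq bool) :=
  all (fun i => in_strip h (lv s i)) (iota 0 (size s).+1).

Definition ends_at (h : nat) (c : int) (s : seq bool) :=
  bounded_path h s && (lv s (size s) == c).

Lemma bounded_path_rcons h s b :
  bounded_path h (rcons s b) =
  bounded_path h s && in_strip h (lv s (size s) + stepv b).
Proof.
rewrite /bounded_path size_rcons -addn1 iotaD all_cat add0n; congr (_ && _).
  apply: eq_in_all => i; rewrite mem_iota add0n => /andP[_ lt_i_s].
  by rewrite lv_rcons.
by rewrite /= andbT lv_rcons_size.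
Qed.

Lemma bounded_path_last h s : bounded_path h s -> in_strip h (lv s (size s)).
Proof. by move/allP; apply; rewrite mem_iota add0n ltnSn. Qed.

Definition npaths (h n : nat) (c : int) := count (ends_at h c) (bool_seqs n).

Lemma a_countE h n k : a_count h n k = npaths h n k%:Z.
Proof.
rewrite /a_count /npaths -card_tuple_bool_seqs; apply: eq_card => t.
rewrite !inE /ends_at /bounded_path size_tuple; congr (_ && _).
apply/forallP/allP => [bnd i|bnd i].
  by rewrite mem_iota add0n => /andP[_ lt_i_n]; exact: (bnd (Ordinal lt_i_n)).
by apply: bnd; rewrite mem_iota add0n ltn_ord.
Qed.

Lemma npaths0 h c : npaths h 0 c = (c == 0).
Proof.
by rewrite /npaths /= /ends_at /bounded_path /= /lv big_ord0 eq_sym; case: (c == 0).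
Qed.

Lemma npaths_out h n c : ~~ in_strip h c -> npaths h n c = 0%N.
Proof.
move=> c_out; rewrite /npaths (eq_count (a2 := pred0)) ?count_pred0 // => s /=.
by apply/negP => /andP[/bounded_path_last + /eqP end_s]; rewrite end_s (negPf c_out).
Qed.

Lemma in_strip_addE h (c L x : int) : in_strip h c ->
  in_strip h (L + x) && (L + x == c) = (L == c - x).
Proof.
move=> c_in; apply/andP/eqP => [[_ /eqP <-]|->]; first by rewrite addrK.
by rewrite subrK eqxx c_in.
Qed.

Lemma npathsS h n c : in_strip h c ->
  npaths h n.+1 c = (npaths h n (c - 1) + npaths h n (c + 2))%N.
Proof.
move=> c_in; rewrite /npaths count_bool_seqsS; congr (_ + _)%N;
  apply: eq_count => s /=; rewrite /ends_at bounded_path_rcons size_rcons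
  lv_rcons_size -[in LHS]andbA; congr (_ && _).
- exact: in_strip_addE.
- by rewrite in_strip_addE // opprK.
Qed.

Lemma dSSS j : d j.+3 = d j.+2 - 'X^3 * d j.
Proof. by rewrite /d /=; case: (dtrip j) => [[x y] w]. Qed.

Lemma d_expand j : d j = d j.+1 + (if (2 <= j)%N then 'X^3 * d (j - 2) else 0).
Proof. by case: j => [|[|j]] /=; rewrite ?addr0 // dSSS subn2 /= subrK. Qed.

Section TransferSystem.

Variable h : nat.

Definition transfer_system (X : nat -> nat -> int) := forall n k, (k <= h)%N ->
  X n k = (if k == 0%N then (d h.+1)`_n else 0) +
    (if n is n'.+1 then (if k is k'.+1 then X n' k' else 0) +
       (if (k + 2 <= h)%N then X n' (k + 2)%N else 0) else 0).

Lemma transfer_system_uniq X Y : transfer_system X -> transfer_system Y ->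
  forall n k, (k <= h)%N -> X n k = Y n k.
Proof.
move=> sysX sysY; elim=> [|n IHn] k le_k_h; rewrite sysX // sysY //.
congr (_ + (_ + _)); first by case: k le_k_h => // k /ltnW /IHn.
by case: ifP => // /IHn.
Qed.

Lemma Xd_expand k : (k <= h)%N ->
  'X^k * d (h - k) =
    (if k == 0%N then d h.+1 else 0) +
    (if k is k'.+1 then 'X * ('X^k' * d (h - k')) else 0) +
    (if (k + 2 <= h)%N then 'X * ('X^(k + 2) * d (h - (k + 2))) else 0).
Proof.
case: k => [|k] le_k_h /=.
  rewrite expr0 !mul1r subn0 add0n addr0 (d_expand h).
  by case: ifP => _ //; rewrite mulrA -exprS.
rewrite add0r (d_expand (h - k.+1)) -subSn // subSS.
have -> : (2 <= h - k.+1)%N = (k.+1 + 2 <= h)%N by rewrite leq_subRL // addnC.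
rewrite mulrDr mulrA -exprS; congr (_ + _).
case: ifP => _; last by rewrite mulr0.
by rewrite mulrA -exprD [RHS]mulrA -exprS subnDA addnS.
Qed.

Lemma transfer_system_Xd : transfer_system (fun n k => ('X^k * d (h - k))`_n).
Proof.
move=> n k le_k_h /=; rewrite [in LHS](Xd_expand _ le_k_h) !coefD -addrA.
congr (_ + _); first by case: (k == 0%N); rewrite ?coef0.
case: n => [|n].
  by case: k le_k_h => [|k] _; case: ifP => _; rewrite ?coef0 ?coefXM ?addr0.
congr (_ + _); first by case: k le_k_h => [|k] _; rewrite ?coef0 ?coefXM.
by case: ifP; rewrite ?coef0 ?coefXM.
Qed.

Lemma f_gen0 k : f_gen h k 0 = (k == 0%N)%:R.
Proof. by rewrite /f_gen a_countE npaths0; case: k. Qed.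

Lemma f_genS n k : (k <= h)%N ->
  f_gen h k n.+1 = (if k is k'.+1 then f_gen h k' n else 0) +
                   (if (k + 2 <= h)%N then f_gen h (k + 2) n else 0).
Proof.
move=> le_k_h; rewrite /f_gen !a_countE npathsS ?PoszD; last first.
  by rewrite /in_strip !lez_nat le_k_h.
congr (_ + _).
  case: k le_k_h => [|k] _; first by rewrite npaths_out.
  by rewrite -[k.+1]addn1 PoszD addrK a_countE.
case: ifP => [_|lt_h_k2] //.
by rewrite npaths_out // /in_strip -PoszD !lez_nat lt_h_k2 andbF.
Qed.

Lemma transfer_system_f_gen :
  transfer_system (fun n k => fps_mul (f_gen h k) (fps_of_poly (d h.+1)) n).
Proof.
move=> n k le_k_h; rewrite /fps_mul /fps_of_poly.
case: n => [|n].
  by rewrite big_ord1 addr0 f_gen0 subn0; case: (k == 0%N); rewrite ?mul1r ?mul0r.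
rewrite big_ord_recl f_gen0 subn0 mulr_natl mulrb; congr (_ + _).
under eq_bigr do rewrite lift0 subSS (f_genS _ _ le_k_h) mulrDl.
rewrite big_split /=; congr (_ + _).
  by case: k le_k_h => [|k] _ //; rewrite big1 // => i _; rewrite mul0r.
by case: ifP => _ //; rewrite big1 // => i _; rewrite mul0r.
Qed.

End TransferSystem.

Theorem mainTheorem4 (h k : nat) (hk : (k <= h)%N) :
  fps_mul (f_gen h k) (fps_of_poly (d h.+1)) = fps_of_poly ('X^k * d (h - k)%N).
Proof.
apply: functional_extensionality_dep => n.
exact: transfer_system_uniq (transfer_system_f_gen h) (transfer_system_Xd h) n k hk.
Qed.
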